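(* Let $\Omega\subset\mathbb R^d$ be a bounded Borel set, $f:\Omega\to[0,\infty)$ with $\int_\Omega f=1$, $p\ge1$, $x_1,\dots,x_k\in\Omega$, and $h_1,\dots,h_k:[0,1]\to[0,\infty)$ strictly increasing. Then every equilibrium is a Pareto optimum.
   Context: A partition of $\Omega$ is a family of Borel sets pairwise disjoint up to $f$-negligible sets whose union has full $f\,dx$-measure. For a partition $(B_i)_{i=1}^k$, $C(x,(B_i)_i)=\sum_{i=1}^k[|x-x_i|^p+h_i(\int_{B_i}f\,dx)]\mathbf 1_{B_i}(x)$. A partition $(A_i)$ is an equilibrium if, with $c_j=\int_{A_j}f$, for every $i$: $A_i=\{x:|x-x_i|^p+h_i(c_i)<|x-x_j|^p+h_j(c_j)\ \forall j\ne i\}$ up to $f$-negligible sets. A partition $(A_i)$ is a Pareto optimum if there is no partition $(B_i)_{i=1}^k$ with $C(x,(B_i)_i)\le C(x,(A_i)_i)$ for $f$-a.e. $x$ and strict inequality on a set of positive $f\,dx$-measure. *)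

From HB Require Import structures.
From mathcomp Require Import all_boot all_order all_algebra.
From mathcomp Require Import all_classical all_reals all_analysis.
Set Implicit Arguments.
Unset Strict Implicit.
Unset Printing Implicit Defensive.
Import Order.TTheory GRing.Theory Num.Theory.
Local Open Scope classical_set_scope.
Local Open Scope ring_scope.

(* R^d is represented by d.-tuple R, equipped with the product sigma-algebra
   from measurable_structure (= Borel sigma-algebra of R^d). *)

(* Lebesgue integral on R^d of a function g : R^d -> \bar R, computed as the
   iterated one-dimensional Lebesgue integral (Tonelli); for nonnegative
   measurable g this is the d-dimensional Lebesgue integral. *)
Fixpoint leb_int (R : realType) (n : nat) : (n.-tuple R -> \bar R) -> \bar R :=
  match n return (n.-tuple R -> \bar R) -> \bar R with
  | 0 => fun g => g [tuple]
  | m.+1 => fun g =>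
      (\int[@lebesgue_measure R]_x leb_int (fun t : m.-tuple R => g (cons_tuple x t)))%E
  end.

Definition eucl_dist (R : realType) (d : nat) (x y : d.-tuple R) : R :=
  Num.sqrt (\sum_(i < d) (tnth x i - tnth y i) ^+ 2).

Definition fmeas (R : realType) (d : nat) (Omega : set (d.-tuple R))
  (f : d.-tuple R -> R) (A : set (d.-tuple R)) : \bar R :=
  leb_int (fun x => ((f x)%:E * (\1_(A `&` Omega) x)%:E)%E).

Definition fnegligible (R : realType) (d : nat) (Omega : set (d.-tuple R))
  (f : d.-tuple R -> R) (N : set (d.-tuple R)) : Prop :=
  exists N' : set (d.-tuple R),
    measurable N' /\ N `&` Omega `<=` N' /\ fmeas Omega f N' = 0%E.

Definition is_partition (R : realType) (d k : nat) (Omega : set (d.-tuple R))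
  (f : d.-tuple R -> R) (B : 'I_k -> set (d.-tuple R)) : Prop :=
  (forall i, measurable (B i) /\ B i `<=` Omega) /\
  (forall i j, i != j -> fnegligible Omega f (B i `&` B j)) /\
  fnegligible Omega f (Omega `\` \bigcup_(i in [set: 'I_k]) B i).

(* Mass c_i = \int_{B_i} f dx (a finite real number for partitions). *)
Definition mass (R : realType) (d : nat) (Omega : set (d.-tuple R))
  (f : d.-tuple R -> R) (B : set (d.-tuple R)) : R :=
  fine (fmeas Omega f B).

Definition cost (R : realType) (d k : nat) (Omega : set (d.-tuple R))
  (f : d.-tuple R -> R) (p : R) (xs : 'I_k -> d.-tuple R) (h : 'I_k -> R -> R)
  (B : 'I_k -> set (d.-tuple R)) (x : d.-tuple R) : R :=
  \sum_(i < k) ((eucl_dist x (xs i)) `^ p + h i (mass Omega f (B i))) * \1_(B i) x.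

Definition symdiff (T : Type) (A B : set T) : set T := (A `\` B) `|` (B `\` A).

Definition is_equilibrium (R : realType) (d k : nat) (Omega : set (d.-tuple R))
  (f : d.-tuple R -> R) (p : R) (xs : 'I_k -> d.-tuple R) (h : 'I_k -> R -> R)
  (A : 'I_k -> set (d.-tuple R)) : Prop :=
  is_partition Omega f A /\
  forall i : 'I_k,
    fnegligible Omega f
      (symdiff (A i)
         [set x | forall j : 'I_k, j != i ->
            (eucl_dist x (xs i)) `^ p + h i (mass Omega f (A i)) <
            (eucl_dist x (xs j)) `^ p + h j (mass Omega f (A j))]).

Definition is_pareto_optimum (R : realType) (d k : nat) (Omega : set (d.-tuple R))
  (f : d.-tuple R -> R) (p : R) (xs : 'I_k -> d.-tuple R) (h : 'I_k -> R -> R)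
  (A : 'I_k -> set (d.-tuple R)) : Prop :=
  is_partition Omega f A /\
  ~ exists B : 'I_k -> set (d.-tuple R),
      is_partition Omega f B /\
      fnegligible Omega f
        [set x | ~ (cost Omega f p xs h B x <= cost Omega f p xs h A x)] /\
      ~ fnegligible Omega f
        [set x | cost Omega f p xs h B x < cost Omega f p xs h A x].

From mathcomp Require Import all_boot all_order all_algebra.
From mathcomp Require Import all_classical all_reals all_analysis.
From mathcomp Require Import measurable_realfun.
Import Order.TTheory GRing.Theory Num.Theory.
Import numFieldNormedType.Exports.
Local Open Scope classical_set_scope.
Local Open Scope ring_scope.

(* Let B be a competitor partition with C(x, B) <= C(x, A) almost everywhere,
   and write c_j, b_j for the masses of A_j, B_j.  At almost every x of B_j,
   lying in the cell A_i, the equilibrium property of A gives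
     |x - x_j|^p + h_j(b_j) = C(x, B) <= C(x, A) <= |x - x_j|^p + h_j(c_j),
   so b_j <= c_j by strict monotonicity of h_j (trivially if B_j is
   negligible).  Both families of masses sum to 1, hence b_j = c_j for all j,
   and then C(x, B) = |x - x_j|^p + h_j(c_j) >= C(x, A) almost everywhere:
   B is nowhere a strict improvement. *)

Section iterated_integral.
Local Set Implicit Arguments.
Variable R : realType.
Local Open Scope ereal_scope.

Lemma leb_int_ge0 n (g : n.-tuple R -> \bar R) :
  (forall t, 0 <= g t) -> 0 <= leb_int g.
Proof.
elim: n g => [|n IH] g g0 /=; first exact: g0.
by apply: integral_ge0 => x _; apply: IH.
Qed.

Lemma leb_int0 n : leb_int (fun _ : n.-tuple R => 0) = 0.
Proof.
elim: n => [|n IH] //=.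
under eq_integral => x _ do rewrite IH.
exact: integral0.
Qed.

Lemma measurable_leb_int n dX (X : measurableType dX)
    (G : X * n.-tuple R -> \bar R) :
  measurable_fun setT G -> (forall z, 0 <= G z) ->
  measurable_fun setT (fun x => leb_int (fun t => G (x, t))).
Proof.
elim: n dX X G => [|n IH] dX X G mG G0 /=.
  exact: (measurableT_comp mG (measurable_fun_pair _ _)).
pose G' (z : (X * R) * n.-tuple R) := G (z.1.1, cons_tuple z.1.2 z.2).
have mG' : measurable_fun setT G'.
  apply: (measurableT_comp mG); apply: measurable_fun_pair.
    exact: (measurableT_comp measurable_fst measurable_fst).
  apply: measurable_cons => //.
  exact: (measurableT_comp measurable_snd measurable_fst).
have := @measurable_fun_fubini_tonelli_F _ _ X _ R lebesgue_measure
  (fun xy => leb_int (fun t => G' (xy, t))) (IH _ _ G' mG' (fun z => G0 _))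
  (fun z => leb_int_ge0 _ (fun t => G0 _)).
by rewrite /fubini_F.
Qed.

Lemma measurable_leb_int_cons n (g : n.+1.-tuple R -> \bar R) :
  measurable_fun setT g -> (forall t, 0 <= g t) ->
  measurable_fun setT (fun x => leb_int (fun t => g (cons_tuple x t))).
Proof.
move=> mg g0.
pose G (z : R * n.-tuple R) := g (cons_tuple z.1 z.2).
apply: (measurable_leb_int (G := G) _ (fun z => g0 _)).
exact: (measurableT_comp mg (measurable_cons _ _)).
Qed.

Lemma leb_intD n (g1 g2 : n.-tuple R -> \bar R) :
  measurable_fun setT g1 -> measurable_fun setT g2 ->
  (forall t, 0 <= g1 t) -> (forall t, 0 <= g2 t) ->
  leb_int (fun t => g1 t + g2 t) = leb_int g1 + leb_int g2.
Proof.
elim: n g1 g2 => [|n IH] g1 g2 m1 m2 g10 g20 //=.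
have mcons x : measurable_fun setT (fun t : n.-tuple R => cons_tuple x t).
  exact: measurable_cons.
transitivity (\int[@lebesgue_measure R]_x
    (leb_int (fun t => g1 (cons_tuple x t)) +
     leb_int (fun t => g2 (cons_tuple x t)))).
  by apply: eq_integral => x _; apply: IH => //;
    apply: measurableT_comp (mcons x).
apply: ge0_integralD => //.
- by move=> x _; apply: leb_int_ge0.
- exact: measurable_leb_int_cons.
- by move=> x _; apply: leb_int_ge0.
- exact: measurable_leb_int_cons.
Qed.

End iterated_integral.

Section density_measure.
Local Set Implicit Arguments.
Local Unset Strict Implicit.
Variables (R : realType) (d : nat) (Omega : set (d.-tuple R)).
Variable f : d.-tuple R -> R.
Hypothesis mOmega : measurable Omega.
Hypothesis mf : measurable_fun Omega f.
Hypothesis f_ge0 : forall x, Omega x -> 0 <= f x.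
Local Open Scope ereal_scope.

Local Notation mu := (fmeas Omega f).
Local Notation negligible := (fnegligible Omega f).

Let density A x := (f x)%:E * (\1_(A `&` Omega) x)%:E.

Let density_ge0 A x : 0 <= density A x.
Proof.
rewrite /density indicE; have [AOx|nAOx] := pselect ((A `&` Omega) x).
  by rewrite mem_set // mule_ge0 // lee_fin f_ge0 //; case: AOx.
by rewrite memNset // mule0.
Qed.

Let measurable_density A : measurable A -> measurable_fun setT (density A).
Proof.
move=> mA.
have -> : density A = EFin \o (fun x => (f \_ Omega) x * \1_(A `&` Omega) x)%R.
  apply/funext => x; rewrite /density /= indicE.
  have [[Ax Ox]|nAOx] := pselect ((A `&` Omega) x).
    by rewrite mem_set // patchE mem_set.
  by rewrite memNset // !mulr0 mule0.
apply/measurable_EFinP; apply: measurable_funM.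
  exact/(measurable_restrictT _ _).1.
exact/measurable_indic/measurableI.
Qed.

Lemma fmeas_ge0 A : 0 <= mu A.
Proof. by apply: leb_int_ge0 => x; apply: density_ge0. Qed.

Lemma fmeas0 : mu set0 = 0.
Proof.
rewrite /fmeas -[RHS](@leb_int0 R d); congr leb_int; apply/funext => x.
by rewrite set0I indicE in_set0 mule0.
Qed.

Lemma fmeas_setIr A : mu (A `&` Omega) = mu A.
Proof. by rewrite /fmeas -setIA setIid. Qed.

Lemma fmeasU A B : measurable A -> measurable B -> A `&` B = set0 ->
  mu (A `|` B) = mu A + mu B.
Proof.
move=> mA mB AB0; rewrite /fmeas -leb_intD;
  try by [exact: measurable_density|exact: density_ge0].
congr leb_int; apply/funext => x; rewrite !indicE.
have [AOx|nAOx] := pselect ((A `&` Omega) x).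
  have nBOx : ~ (B `&` Omega) x.
    by case: AOx => Ax _ [Bx _]; have : (A `&` B) x by []; rewrite AB0.
  have ABOx : ((A `|` B) `&` Omega) x by case: AOx => Ax Ox; split=> //; left.
  by rewrite (mem_set ABOx) (mem_set AOx) (memNset nBOx) mule0 adde0.
rewrite (memNset nAOx) mule0 add0e.
have [BOx|nBOx] := pselect ((B `&` Omega) x).
  have ABOx : ((A `|` B) `&` Omega) x by case: BOx => Bx Ox; split=> //; right.
  by rewrite (mem_set ABOx) (mem_set BOx).
by rewrite !memNset // => -[[Ax|Bx] Ox]; [apply: nAOx|apply: nBOx].
Qed.

Lemma le_fmeas A B : measurable A -> measurable B -> A `<=` B -> mu A <= mu B.
Proof.
move=> mA mB AB; rewrite -(setDUK AB) fmeasU //; last 2 first.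
- exact: measurableD.
- by rewrite setDIK.
by rewrite leeDl // fmeas_ge0.
Qed.

Lemma fmeasU_le A B : measurable A -> measurable B ->
  mu (A `|` B) <= mu A + mu B.
Proof.
move=> mA mB; have mDA : measurable ((A `|` B) `\` A).
  by apply: measurableD => //; exact: measurableU.
rewrite -{1}(setDUK (@subsetUl _ A B)) fmeasU ?setDIK //.
by rewrite leeD2l // le_fmeas // => x [[]].
Qed.

Lemma fmeas_negligible N : measurable N -> negligible N -> mu N = 0.
Proof.
move=> mN [N' [mN' [NN' N'0]]].
apply/eqP; rewrite eq_le fmeas_ge0 andbT -fmeas_setIr -N'0 le_fmeas //.
exact: measurableI.
Qed.

Lemma fnegligible0 : negligible set0.
Proof. by exists set0; split=> //; split; [move=> x []|exact: fmeas0]. Qed.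

Lemma sub_fnegligible X Y : X `&` Omega `<=` Y -> negligible Y -> negligible X.
Proof.
move=> XY [N [mN [YN N0]]]; exists N; split=> //; split=> //.
by move=> x [Xx Ox]; apply: YN; split=> //; apply: XY.
Qed.

Lemma fnegligibleU X Y : negligible X -> negligible Y -> negligible (X `|` Y).
Proof.
move=> [N1 [mN1 [XN1 N10]]] [N2 [mN2 [YN2 N20]]].
exists (N1 `|` N2); split; first exact: measurableU.
split; first by move=> x [[Xx|Yx] Ox]; [left; apply: XN1|right; apply: YN2].
apply/eqP; rewrite eq_le fmeas_ge0 andbT.
by apply: le_trans (fmeasU_le mN1 mN2) _; rewrite N10 N20 adde0.
Qed.

Lemma fnegligible_bigsetU (I : eqType) (s : seq I) (F : I -> set (d.-tuple R)) :
  (forall i, i \in s -> negligible (F i)) ->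
  negligible (\big[setU/set0]_(i <- s) F i).
Proof.
move=> nF; rewrite big_seq; elim/big_ind: _ => //.
- exact: fnegligible0.
- exact: fnegligibleU.
Qed.

Lemma fnegligible_bigcup (I : finType) (F : I -> set (d.-tuple R)) :
  (forall i, negligible (F i)) -> negligible (\bigcup_i F i).
Proof.
move=> nF; have -> : [set: I] = [set` enum I].
  by apply/seteqP; split=> i //= _; rewrite mem_enum.
by rewrite bigcup_seq; apply: fnegligible_bigsetU => i _.
Qed.

Lemma exists_point_outside_negligible X N : ~ negligible X -> negligible N ->
  exists x, [/\ X x, Omega x & ~ N x].
Proof.
move=> nX nN; apply: contrapT => noX; apply: nX; apply: sub_fnegligible nN.
by move=> x [Xx Ox]; apply: contrapT => Nx; apply: noX; exists x.
Qed.

Lemma fmeasU_negligible A B : measurable A -> measurable B ->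
  negligible (A `&` B) -> mu (A `|` B) = mu A + mu B.
Proof.
move=> mA mB nAB; have mBA : measurable (B `\` A) by exact: measurableD.
have -> : A `|` B = A `|` (B `\` A) by rewrite setUDr setDv setD0.
rewrite fmeasU ?setDIK //; congr (_ + _); apply/eqP; rewrite eq_le.
apply/andP; split; first by apply: le_fmeas => // x [].
have mAB : measurable (B `&` A) by exact: measurableI.
rewrite -{1}(setUIDK B A); apply: le_trans (fmeasU_le mAB mBA) _.
by rewrite fmeas_negligible ?add0e // setIC.
Qed.

Lemma fmeas_bigsetU (I : choiceType) (s : seq I) (B : I -> set (d.-tuple R)) :
  uniq s -> (forall i, measurable (B i)) ->
  (forall i j, i != j -> negligible (B i `&` B j)) ->
  mu (\big[setU/set0]_(i <- s) B i) = \sum_(i <- s) mu (B i).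
Proof.
move=> + mB nB; elim: s => [_|a s IH /andP[na us]].
  by rewrite !big_nil fmeas0.
rewrite !big_cons -IH // fmeasU_negligible //; first exact: bigsetU_measurable.
rewrite -bigcup_seq setI_bigcupr bigcup_seq; apply: fnegligible_bigsetU => i si.
by apply: nB; apply: contraNneq na => ->.
Qed.

Hypothesis Omega1 : mu Omega = 1.

Lemma fmeas_le1 X : measurable X -> mu X <= 1.
Proof.
move=> mX; rewrite -fmeas_setIr -Omega1 le_fmeas //; exact: measurableI.
Qed.

Lemma fmeas_mass X : measurable X -> mu X = (mass Omega f X)%:E.
Proof.
move=> mX; rewrite /mass fineK // ge0_fin_numE ?fmeas_ge0 //.
by rewrite (le_lt_trans (fmeas_le1 mX)) ?ltry.
Qed.

Lemma mass_itv X : measurable X -> (0 <= mass Omega f X <= 1)%R.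
Proof. by move=> mX; rewrite -!lee_fin -fmeas_mass // fmeas_ge0 fmeas_le1. Qed.

Lemma sum_mass_partition k (B : 'I_k -> set (d.-tuple R)) :
  is_partition Omega f B -> (\sum_(i < k) mass Omega f (B i) = 1)%R.
Proof.
move=> [mB [nB cov]]; have mBi i : measurable (B i) := (mB i).1.
set U := \big[setU/set0]_(i <- index_enum 'I_k) B i.
have mU : measurable U by exact: bigsetU_measurable.
have U1 : mu U = 1.
  apply/eqP; rewrite eq_le fmeas_le1 //= -Omega1.
  have mOU : measurable (Omega `\` U) by exact: measurableD.
  apply: le_trans (_ : mu (U `|` (Omega `\` U)) <= _).
    apply: le_fmeas => //; first exact: measurableU.
    by move=> x Ox; have [Ux|nUx] := pselect (U x); [left|right].
  apply: le_trans (fmeasU_le mU mOU) _.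
  rewrite [X in _ + X]fmeas_negligible ?adde0 //.
  apply: sub_fnegligible cov => x [[Ox nUx] _]; split=> // -[i _ Bix].
  by apply: nUx; rewrite /U -bigcup_seq; exists i; rewrite //= mem_index_enum.
apply: EFin_inj; rewrite -sumEFin -U1 fmeas_bigsetU ?index_enum_uniq //.
by apply: eq_bigr => i _; rewrite fmeas_mass.
Qed.

Section equilibrium.
Variables (k : nat) (p : R) (xs : 'I_k -> d.-tuple R) (h : 'I_k -> R -> R).
Implicit Types A B : 'I_k -> set (d.-tuple R).
Local Open Scope ring_scope.

Local Notation cost := (cost Omega f p xs h).
Local Notation mass := (mass Omega f).

Definition cell_cost (B : 'I_k -> set (d.-tuple R)) x i :=
  eucl_dist x (xs i) `^ p + h i (mass (B i)).

Lemma cost_cell B x j :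
  B j x -> (forall i, B i x -> i = j) -> cost B x = cell_cost B x j.
Proof.
move=> Bjx uj; rewrite /cost (bigD1 j) //= big1 ?addr0.
  by rewrite indicE mem_set // mulr1.
move=> i ij; rewrite indicE memNset ?mulr0 // => /uj /eqP.
by rewrite (negPf ij).
Qed.

Lemma partition_ae_unique_cell B :
  is_partition Omega f B -> negligible [set x | ~ exists! i, B i x].
Proof.
move=> [_ [nB cov]].
pose overlap (ij : 'I_k * 'I_k) :=
  if ij.1 == ij.2 then set0 else B ij.1 `&` B ij.2.
have nO : negligible (\bigcup_ij overlap ij).
  apply: fnegligible_bigcup => // -[i j]; rewrite /overlap /=.
  by case: eqVneq => [_|ij]; [exact: fnegligible0|exact: nB].
apply: sub_fnegligible (fnegligibleU cov nO) => // x [nu Ox].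
have [[i _ Bix]|] := pselect ((\bigcup_i B i) x); last by left.
right; have [j Bjx ji] : exists2 j, B j x & j != i.
  apply: contrapT => nj; apply: nu; exists i; split=> // j Bjx.
  apply/eqP; rewrite eq_sym; apply: contrapT => /negP ji.
  by apply: nj; exists j.
by exists (j, i) => //; rewrite /overlap /= (negPf ji).
Qed.

Lemma equilibrium_ae_preferred A : is_equilibrium Omega f p xs h A ->
  negligible [set x | exists i, A i x /\
    ~ (forall j, j != i -> cell_cost A x i < cell_cost A x j)].
Proof.
move=> [_ prefA]; apply: sub_fnegligible (fnegligible_bigcup prefA).
by move=> x [[i [Aix nS]] _]; exists i => //; left.
Qed.

Lemma equilibrium_cost_le A x i j :
  A i x -> (forall l, A l x -> l = i) ->
  (forall l, l != i -> cell_cost A x i < cell_cost A x l) ->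
  cost A x <= cell_cost A x j.
Proof.
move=> Aix ui pref; rewrite (cost_cell Aix ui).
by have [->|ji] := eqVneq j i; [|exact/ltW/pref].
Qed.

Section competitor.
Variables A B : 'I_k -> set (d.-tuple R).
Hypothesis h_incr : forall i a b, 0 <= a -> a < b -> b <= 1 -> h i a < h i b.
Hypothesis eqA : is_equilibrium Omega f p xs h A.
Hypothesis partB : is_partition Omega f B.
Hypothesis B_le_A : negligible [set x | ~ cost B x <= cost A x].

Let generic x := [/\ exists! i, A i x, exists! j, B j x,
  (forall i, A i x -> forall j, j != i -> cell_cost A x i < cell_cost A x j)
  & cost B x <= cost A x].

Lemma not_generic_negligible : negligible [set x | ~ generic x].
Proof.
have nA := partition_ae_unique_cell eqA.1.
have nB := partition_ae_unique_cell partB.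
have nP := equilibrium_ae_preferred eqA.
have nAB := fnegligibleU nA nB; have nPB := fnegligibleU nP B_le_A.
apply: sub_fnegligible (fnegligibleU nAB nPB).
move=> x [ng _]; apply: contrapT => /not_orP[/not_orP[uA uB] /not_orP[pA BA]].
apply: ng; split; try exact: contrapT.
by move=> i Aix; apply: contrapT => npref; apply: pA; exists i.
Qed.

Lemma generic_costA_le x j : generic x -> cost A x <= cell_cost A x j.
Proof.
move=> [[i [Aix ui]] _ pref _].
exact: equilibrium_cost_le Aix (fun l Alx => esym (ui l Alx)) (pref i Aix).
Qed.

Lemma generic_costB x j : generic x -> B j x -> cost B x = cell_cost B x j.
Proof.
move=> [_ [j' [Bj'x uj']] _ _] Bjx; have <- := uj' _ Bjx.
exact: cost_cell Bj'x (fun l Blx => esym (uj' l Blx)).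
Qed.

Lemma competitor_mass_le j : mass (B j) <= mass (A j).
Proof.
have mAj := (eqA.1.1 j).1; have mBj := (partB.1 j).1.
have /andP[mA0 _] := mass_itv mAj; have /andP[_ mB1] := mass_itv mBj.
have [nBj|/exists_point_outside_negligible] := pselect (negligible (B j)).
  by have := fmeas_negligible mBj nBj; rewrite fmeas_mass // => -[->].
move=> /(_ _ not_generic_negligible) [x [Bjx _ /contrapT gx]].
have [_ _ _ BA] := gx.
have hBA : h j (mass (B j)) <= h j (mass (A j)).
  rewrite -(lerD2l (eucl_dist x (xs j) `^ p)) -[leLHS](generic_costB gx Bjx).
  exact: le_trans BA (generic_costA_le j gx).
by rewrite leNgt; apply: contraTN hBA => AB; rewrite -ltNge; apply: h_incr.
Qed.

Lemma competitor_mass_eq j : mass (B j) = mass (A j).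
Proof.
have sum0 : \sum_(i < k) (mass (A i) - mass (B i)) = 0.
  by rewrite sumrB !sum_mass_partition ?subrr //; exact: eqA.1.
apply/eqP; rewrite eq_sym -subr_eq0; apply/eqP.
move: sum0 => /psumr_eq0P; apply => // i _.
by rewrite subr_ge0 competitor_mass_le.
Qed.

Lemma competitor_lt_negligible : negligible [set x | cost B x < cost A x].
Proof.
apply: sub_fnegligible not_generic_negligible => x [BA _] gx.
have [_ [j [Bjx _]] _ _] := gx.
move: BA; rewrite /= (generic_costB gx Bjx).
have -> : cell_cost B x j = cell_cost A x j.
  by rewrite /cell_cost competitor_mass_eq.
by rewrite ltNge generic_costA_le.
Qed.

End competitor.

End equilibrium.

End density_measure.

Theorem corollary4p10 (R : realType) (d k : nat) (Omega : set (d.-tuple R))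
  (f : d.-tuple R -> R) (p : R) (xs : 'I_k -> d.-tuple R) (h : 'I_k -> R -> R) :
  measurable Omega ->
  (exists M : R, forall x y, Omega x -> Omega y -> eucl_dist x y <= M) ->
  measurable_fun Omega f ->
  (forall x, Omega x -> 0 <= f x) ->
  fmeas Omega f Omega = 1%E ->
  1 <= p ->
  (forall i, Omega (xs i)) ->
  (forall i a, 0 <= a <= 1 -> 0 <= h i a) ->
  (forall i a b, 0 <= a -> a < b -> b <= 1 -> h i a < h i b) ->
  forall A : 'I_k -> set (d.-tuple R),
    is_equilibrium Omega f p xs h A -> is_pareto_optimum Omega f p xs h A.
Proof.
move=> mOmega _ mf f_ge0 Omega1 _ _ _ h_incr A eqA; split; first exact: eqA.1.
move=> [B [partB [B_le_A B_lt_A]]]; apply: B_lt_A.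
exact: (competitor_lt_negligible mOmega mf f_ge0 Omega1 h_incr eqA partB
  B_le_A).
Qed.
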